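(* Let $\epsilon\in\{1,-1\}$. Let $X,Y,Z\in\mathbb{Z}[i]$ satisfy $X^2+Y^2=\epsilon iZ^2$, $\gcd(X,Y,Z)\in U$, $XYZ\neq0$, where $X,Y\in O^I$ and $Z=(1+i)W$ with $W\in O^I$. Then there exist an integer $t$, $0\le t\le 3$, and $P,Q\in G$, both not divisible by $1+i$, with $\gcd(P,Q)=1$, such that $$X=i^{t+1}\frac{P^2+\epsilon(-1)^t iQ^2}{1+i},\quad Y=i^t\frac{P^2-\epsilon(-1)^t iQ^2}{1+i},\quad Z=(1+i)PQ.$$
   Context: $\mathbb{Z}[i]$ is the ring of Gaussian integers, $U=\{1,-1,i,-i\}$ its unit group; $R(\alpha),I(\alpha)$ are real and imaginary parts. $\gcd(\cdot)\in U$ means no common non-unit divisor; for $P,Q\in G$, $\gcd(P,Q)=1$ means no common prime factor. $O=\{\alpha: R(\alpha)+I(\alpha)\equiv1\pmod 2\}$, $O^I=\{\alpha\in O: R(\alpha)\equiv 1\pmod 4\}$. $G$ is the set of Gaussian integers $(1+i)^{a_1}p_2^{a_2}\cdots p_m^{a_m}$ with integers $a_j\ge0$ and $p_j$ distinct Gaussian primes in $O^I$. *)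

From Stdlib Require Import ZArith List.
Open Scope Z_scope.

Record GI := mkGI { re : Z ; im : Z }.

Definition gadd (a b : GI) : GI := mkGI (re a + re b) (im a + im b).
Definition gopp (a : GI) : GI := mkGI (- re a) (- im a).
Definition gmul (a b : GI) : GI :=
  mkGI (re a * re b - im a * im b) (re a * im b + im a * re b).
Definition gsub (a b : GI) : GI := gadd a (gopp b).
Definition gzero : GI := mkGI 0 0.
Definition gone : GI := mkGI 1 0.
Definition gi : GI := mkGI 0 1.
Definition gofZ (z : Z) : GI := mkGI z 0.
Fixpoint gpow (a : GI) (n : nat) : GI :=
  match n with O => gone | S k => gmul a (gpow a k) end.

Definition oneplusi : GI := mkGI 1 1.

Definition gdiv (d a : GI) : Prop := exists c, a = gmul d c.

Definition inU (u : GI) : Prop :=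
  u = gone \/ u = gopp gone \/ u = gi \/ u = gopp gi.

Definition gprime (p : GI) : Prop :=
  p <> gzero /\ ~ inU p /\
  forall a b, p = gmul a b -> inU a \/ inU b.

Definition inO (a : GI) : Prop := Z.odd (re a + im a) = true.
Definition inOI (a : GI) : Prop := inO a /\ re a mod 4 = 1.

Fixpoint prod_pows (l : list (GI * nat)) : GI :=
  match l with
  | nil => gone
  | (p, k) :: l' => gmul (gpow p k) (prod_pows l')
  end.

Definition inG (x : GI) : Prop :=
  exists (a1 : nat) (l : list (GI * nat)),
    NoDup (map fst l) /\
    (forall p k, In (p, k) l -> gprime p /\ inOI p) /\
    x = gmul (gpow oneplusi a1) (prod_pows l).

Definition gcd3_unit (x y z : GI) : Prop :=
  forall d, gdiv d x -> gdiv d y -> gdiv d z -> inU d.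

(* gcd(P,Q) = 1 for P,Q in G: no common prime factor *)
Definition no_common_prime (p q : GI) : Prop :=
  forall r, gprime r -> gdiv r p -> gdiv r q -> False.

From Stdlib Require Import ZArith List Lia Ring Classical Wf_nat.
Open Scope Z_scope.

(** Since X and Y are primary (in O^I), X + iY = (1+i)A and X - iY = (1+i)B with A, B odd, and
    AB = εiW².  A common divisor of A and B is odd, hence divides X, Y and (being coprime
    to W and dividing W²) also W, so it is a unit.  In the Euclidean ring Z[i] the factor A
    of a unit times a square, coprime to its cofactor, is itself a unit times a square:
    A = i^t P² with P primary.  Then W = PQ with Q primary and i^t B = εiQ², and solving
    for X and Y gives the formulas.  P and Q lie in G because every primary Gaussian integer
    is a product of primary primes. *)

Lemma GI_ring : ring_theory gzero gone gadd gmul gsub gopp (@eq GI).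
Proof.
  constructor; intros; repeat match goal with x : GI |- _ => destruct x as [x1 x2] end;
    unfold gsub, gadd, gopp, gmul, gzero, gone; cbn [re im]; f_equal; ring.
Qed.
Add Ring GIring : GI_ring.

Lemma gtwo_1pi_sq : gadd gone gone = gmul (gmul oneplusi oneplusi) (gopp gi).
Proof. reflexivity. Qed.

Lemma gsq_1pi : gmul oneplusi oneplusi = gmul (gadd gone gone) gi.
Proof. reflexivity. Qed.

Lemma gi_sq : gmul gi gi = gopp gone.
Proof. reflexivity. Qed.

Lemma gpow_gmul a b n : gpow (gmul a b) n = gmul (gpow a n) (gpow b n).
Proof. induction n as [|n IH]; cbn [gpow]; [ring | rewrite IH; ring]. Qed.

Lemma gpow_gone n : gpow gone n = gone.
Proof. induction n as [|n IH]; cbn [gpow]; [ring | rewrite IH; ring]. Qed.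

Lemma gpow_gi_solve t b c :
  gmul (gpow gi t) b = c -> b = gmul (gpow gi t) (gmul (gpow (gopp gone) t) c).
Proof.
  intros <-. rewrite <- gi_sq, gpow_gmul.
  transitivity (gmul (gpow (gmul (gmul gi gi) (gmul gi gi)) t) b).
  - rewrite gi_sq. replace (gmul (gopp gone) (gopp gone)) with gone by ring.
    rewrite gpow_gone; ring.
  - rewrite !gpow_gmul; ring.
Qed.

Definition gN (a : GI) : Z := re a * re a + im a * im a.

Lemma gN_mul a b : gN (gmul a b) = gN a * gN b.
Proof. destruct a as [a1 a2], b as [b1 b2]; unfold gN, gmul; cbn [re im]; ring. Qed.

Lemma gN_nonneg a : 0 <= gN a.
Proof. destruct a as [a1 a2]; unfold gN; cbn [re im]; nia. Qed.

Lemma gN_eq0 a : gN a = 0 -> a = gzero.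
Proof.
  destruct a as [x y]; unfold gN, gzero; cbn [re im]; intro H.
  f_equal; nia.
Qed.

Lemma gN_gt0 a : a <> gzero -> 0 < gN a.
Proof.
  intro Ha. pose proof (gN_nonneg a).
  destruct (Z.eq_dec (gN a) 0) as [E|]; [now apply gN_eq0 in E | lia].
Qed.

Lemma gN_ind (Pr : GI -> Prop) :
  (forall a, (forall b, gN b < gN a -> Pr b) -> Pr a) -> forall a, Pr a.
Proof.
  intros H. apply (well_founded_ind (well_founded_ltof GI (fun a => Z.to_nat (gN a)))).
  intros a IH. apply H. intros b Hb. apply IH. unfold ltof.
  pose proof (gN_nonneg b). lia.
Qed.

Lemma gmul_eq0 a b : gmul a b = gzero -> a = gzero \/ b = gzero.
Proof.
  intro H. assert (E : gN a * gN b = 0) by (rewrite <- gN_mul, H; reflexivity).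
  apply Z.mul_eq_0 in E as [E|E]; [left|right]; now apply gN_eq0.
Qed.

Lemma gmul_reg_l a b c : a <> gzero -> gmul a b = gmul a c -> b = c.
Proof.
  intros Ha H.
  assert (E : gmul a (gsub b c) = gzero) by (transitivity (gsub (gmul a b) (gmul a c)); [ring | rewrite H; ring]).
  apply gmul_eq0 in E as [E|E]; [contradiction|].
  transitivity (gadd (gsub b c) c); [ring | rewrite E; ring].
Qed.

Lemma gdiv_refl a : gdiv a a.
Proof. exists gone; ring. Qed.

Lemma gdiv_trans a b c : gdiv a b -> gdiv b c -> gdiv a c.
Proof. intros [x ->] [y ->]; exists (gmul x y); ring. Qed.

Lemma gdiv_mulr a b x : gdiv a b -> gdiv a (gmul b x).
Proof. intros [y ->]; exists (gmul y x); ring. Qed.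

Lemma gdiv_mull a b x : gdiv a b -> gdiv a (gmul x b).
Proof. intros [y ->]; exists (gmul y x); ring. Qed.

Lemma gdiv_add d a b : gdiv d a -> gdiv d b -> gdiv d (gadd a b).
Proof. intros [u ->] [v ->]; exists (gadd u v); ring. Qed.

Lemma gdiv_sub d a b : gdiv d a -> gdiv d b -> gdiv d (gsub a b).
Proof. intros [u ->] [v ->]; exists (gsub u v); ring. Qed.

Lemma gN_eq1_inU a : gN a = 1 -> inU a.
Proof.
  destruct a as [x y]; unfold gN, inU, gone, gopp, gi; cbn [re im]; intro H.
  assert (x = 0 /\ (y = 1 \/ y = -1) \/ y = 0 /\ (x = 1 \/ x = -1)) as [[-> [-> | ->]] | [-> [-> | ->]]]
    by nia; auto.
Qed.

Lemma inU_of_mul_eq1 a b : gmul a b = gone -> inU a.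
Proof.
  intro H. assert (E : gN a * gN b = 1) by (rewrite <- gN_mul, H; reflexivity).
  apply gN_eq1_inU, (Z.eq_mul_1_nonneg _ _ (gN_nonneg a) E).
Qed.

Lemma inU_inv u : inU u -> exists v, gmul u v = gone.
Proof.
  intros [-> | [-> | [-> | ->]]];
    [exists gone | exists (gopp gone) | exists (gopp gi) | exists gi]; reflexivity.
Qed.

Lemma inU_mul a b : inU a -> inU b -> inU (gmul a b).
Proof.
  intros Ha Hb. destruct (inU_inv a Ha) as [a' Ha'], (inU_inv b Hb) as [b' Hb'].
  apply (inU_of_mul_eq1 _ (gmul a' b')).
  transitivity (gmul (gmul a a') (gmul b b')); [ring | rewrite Ha', Hb'; ring].
Qed.

Lemma gdiv_gone_inU d : gdiv d gone -> inU d.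
Proof. intros [c Hc]. now apply (inU_of_mul_eq1 d c). Qed.

Lemma inU_gpow_gi u : inU u -> exists t, (t <= 3)%nat /\ u = gpow gi t.
Proof.
  intros [-> | [-> | [-> | ->]]];
    [exists 0%nat | exists 2%nat | exists 1%nat | exists 3%nat]; split; (lia || reflexivity).
Qed.

(** * Euclidean division and Bezout *)

Lemma round_div p n : 0 < n -> exists q, - n <= 2 * (p - q * n) <= n.
Proof. intro Hn. exists ((2 * p + n) / (2 * n)). Z.div_mod_to_equations. lia. Qed.

(** The quotient rounds [a * conj b / gN b] componentwise to the nearest integers. *)
Lemma gdivmod a b : b <> gzero -> exists q r, a = gadd (gmul b q) r /\ gN r < gN b.
Proof.
  intro Hb. pose proof (gN_gt0 b Hb) as Hn.
  destruct a as [a1 a2], b as [b1 b2]. unfold gN in *; cbn [re im] in *.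
  set (n := b1 * b1 + b2 * b2) in *.
  destruct (round_div (a1 * b1 + a2 * b2) n Hn) as [q1 H1].
  destruct (round_div (a2 * b1 - a1 * b2) n Hn) as [q2 H2].
  set (r := gsub (mkGI a1 a2) (gmul (mkGI b1 b2) (mkGI q1 q2))).
  exists (mkGI q1 q2), r. split; [unfold r; ring|].
  assert (E : (re r * re r + im r * im r) * n
              = (a1 * b1 + a2 * b2 - q1 * n) ^ 2 + (a2 * b1 - a1 * b2 - q2 * n) ^ 2)
    by (unfold r, n, gsub, gadd, gopp, gmul; cbn [re im]; ring).
  nia.
Qed.

Lemma bezout a b : exists g x y, g = gadd (gmul a x) (gmul b y) /\ gdiv g a /\ gdiv g b.
Proof.
  revert a. induction b as [b IH] using gN_ind. intro a.
  destruct (classic (b = gzero)) as [->|Hb].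
  { exists a, gone, gzero. split; [ring|]. split; [apply gdiv_refl | exists gzero; ring]. }
  destruct (gdivmod a b Hb) as (q & r & Hq & Hr).
  destruct (IH r Hr b) as (g & x & y & Hg & Hgb & Hgr).
  exists g, y, (gsub x (gmul q y)). split; [|split; [|exact Hgb]].
  - rewrite Hg, Hq. ring.
  - rewrite Hq. apply gdiv_add; [apply gdiv_mulr|]; assumption.
Qed.

Definition gcoprime (a b : GI) : Prop := exists s t, gadd (gmul a s) (gmul b t) = gone.

Lemma gcoprime_of_common_inU a b :
  (forall d, gdiv d a -> gdiv d b -> inU d) -> gcoprime a b.
Proof.
  intro H. destruct (bezout a b) as (g & x & y & Hg & Ha & Hb).
  destruct (inU_inv g (H g Ha Hb)) as [g' Hg'].
  exists (gmul x g'), (gmul y g'). rewrite <- Hg', Hg. ring.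
Qed.

Lemma gcoprime_common_inU a b d : gcoprime a b -> gdiv d a -> gdiv d b -> inU d.
Proof.
  intros (s & t & E) Ha Hb. apply gdiv_gone_inU. rewrite <- E.
  apply gdiv_add; apply gdiv_mulr; assumption.
Qed.

Lemma gcoprime_gdiv_mul a b c : gcoprime a b -> gdiv a (gmul b c) -> gdiv a c.
Proof.
  intros (s & t & E) [k Hk].
  exists (gadd (gmul c s) (gmul k t)).
  transitivity (gmul c (gadd (gmul a s) (gmul b t))); [rewrite E; ring|].
  transitivity (gadd (gmul a (gmul c s)) (gmul (gmul b c) t)); [ring | rewrite Hk; ring].
Qed.

(** With [g = gcd a w]: [a = a (a s + b t)] exhibits [g²] as a divisor of [a], and
    [g² = (a x + w y)²] with [w² = c⁻¹ a b] exhibits [a] as a divisor of [g²]. *)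
Lemma gcoprime_mul_sq a b c w :
  gcoprime a b -> inU c -> a <> gzero -> gmul a b = gmul c (gmul w w) ->
  exists g u, inU u /\ a = gmul u (gmul g g) /\ gdiv g w.
Proof.
  intros (s & t & Est) Hc Ha Eab.
  destruct (inU_inv c Hc) as [c' Hc'].
  destruct (bezout a w) as (g & x & y & Hg & [a' Ha'] & [w' Hw']).
  set (u := gadd (gmul (gmul a' a') s) (gmul c (gmul (gmul w' w') t))).
  set (e := gadd (gmul a (gmul x x)) (gadd (gmul (gadd w w) (gmul x y))
                                            (gmul c' (gmul b (gmul y y))))).
  assert (Eu : a = gmul u (gmul g g)).
  { transitivity (gmul a (gadd (gmul a s) (gmul b t))); [rewrite Est; ring|].
    transitivity (gadd (gmul (gmul a a) s) (gmul (gmul a b) t)); [ring|].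
    rewrite Eab. rewrite Ha' at 1 2. rewrite Hw'. unfold u; ring. }
  assert (Ee : gmul g g = gmul a e).
  { rewrite Hg.
    transitivity (gadd (gmul a (gadd (gmul a (gmul x x)) (gmul (gadd w w) (gmul x y))))
                       (gmul (gmul (gmul c c') (gmul w w)) (gmul y y)));
      [rewrite Hc'; ring|].
    replace (gmul (gmul c c') (gmul w w)) with (gmul c' (gmul a b))
      by (rewrite Eab; ring).
    unfold e; ring. }
  exists g, u. split; [|split; [exact Eu | exists w'; exact Hw']].
  apply (inU_of_mul_eq1 u e). symmetry. apply (gmul_reg_l a); [exact Ha|].
  transitivity a; [ring|]. rewrite Eu at 1. rewrite Ee. ring.
Qed.

(** * Odd and primary Gaussian integers *)

Lemma inO_mod a : inO a <-> (re a + im a) mod 2 = 1.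
Proof. unfold inO. rewrite Zmod_odd. destruct (Z.odd _); split; congruence. Qed.

Lemma inOI_mod a : inOI a <-> re a mod 4 = 1 /\ im a mod 2 = 0.
Proof.
  unfold inOI. rewrite inO_mod.
  split; intros [H1 H2]; split; try assumption; Z.div_mod_to_equations; lia.
Qed.

Lemma gdiv_1pi_iff a : gdiv oneplusi a <-> ~ inO a.
Proof.
  rewrite inO_mod. destruct a as [a1 a2]; cbn [re im]. split.
  - intros [[c1 c2] E]. unfold gmul, oneplusi in E; cbn [re im] in E.
    injection E as -> ->. Z.div_mod_to_equations. lia.
  - intro H. exists (mkGI ((a1 + a2) / 2) ((a1 + a2) / 2 - a1)).
    unfold gmul, oneplusi; cbn [re im]. f_equal; Z.div_mod_to_equations; lia.
Qed.

Lemma inO_neq0 a : inO a -> a <> gzero.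
Proof. intros H ->. discriminate. Qed.

Lemma inO_gdiv d a : inO a -> gdiv d a -> ~ gdiv oneplusi d.
Proof. intros Ha Hda Hd. apply gdiv_1pi_iff in Ha; [assumption|]. now apply (gdiv_trans _ d). Qed.

Lemma gcoprime_1pi d : ~ gdiv oneplusi d -> gcoprime d oneplusi.
Proof.
  intro Hd. apply gcoprime_of_common_inU. intros k Hkd [c Hc].
  assert (E : gN k * gN c = 2) by (rewrite <- gN_mul, <- Hc; reflexivity).
  pose proof (gN_nonneg k); pose proof (gN_nonneg c).
  assert (gN k = 1 \/ gN c = 1) as [Hk | Hcn] by nia; [now apply gN_eq1_inU|].
  exfalso. apply Hd. destruct (inU_inv c (gN_eq1_inU c Hcn)) as [c' Hc'].
  apply (gdiv_trans _ k); [|exact Hkd]. exists c'.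
  transitivity (gmul k (gmul c c')); [rewrite Hc'; ring | rewrite Hc; ring].
Qed.

Lemma gdiv_half d a : ~ gdiv oneplusi d -> gdiv d (gadd a a) -> gdiv d a.
Proof.
  intros Hd H. pose proof (gcoprime_1pi d Hd) as Hcop.
  assert (E : gadd a a = gmul oneplusi (gmul oneplusi (gmul (gopp gi) a))).
  { transitivity (gmul (gadd gone gone) a); [ring|]. rewrite gtwo_1pi_sq; ring. }
  rewrite E in H. apply (gcoprime_gdiv_mul _ _ _ Hcop), (gcoprime_gdiv_mul _ _ _ Hcop) in H.
  replace a with (gmul gi (gmul (gopp gi) a)); [now apply gdiv_mull|].
  transitivity (gmul (gopp (gmul gi gi)) a); [ring | rewrite gi_sq; ring].
Qed.

Lemma gdiv_of_gdiv_add_sub d X Y : ~ gdiv oneplusi d ->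
  gdiv d (gadd X (gmul gi Y)) -> gdiv d (gsub X (gmul gi Y)) -> gdiv d X /\ gdiv d Y.
Proof.
  intros Hd Hp Hm. split; apply gdiv_half; try assumption.
  - replace (gadd X X) with (gadd (gadd X (gmul gi Y)) (gsub X (gmul gi Y))) by ring.
    now apply gdiv_add.
  - replace (gadd Y Y) with (gmul (gopp gi) (gsub (gadd X (gmul gi Y)) (gsub X (gmul gi Y)))).
    + now apply gdiv_mull, gdiv_sub.
    + transitivity (gmul (gopp (gmul gi gi)) (gadd Y Y)); [ring | rewrite gi_sq; ring].
Qed.

Lemma inOI_mul a b : inOI a -> inOI b -> inOI (gmul a b).
Proof.
  rewrite !inOI_mod. destruct a as [a1 a2], b as [b1 b2]; unfold gmul; cbn [re im].
  intros [Ha1 Ha2] [Hb1 Hb2]. Z.div_mod_to_equations. split; nia.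
Qed.

Lemma inOI_inU_mul u a : inU u -> inOI a -> inOI (gmul u a) -> u = gone.
Proof.
  rewrite !inOI_mod. destruct a as [a1 a2].
  intros [-> | [-> | [-> | ->]]] [Ha1 Ha2] [Hu1 Hu2]; [reflexivity| exfalso ..];
    unfold gmul, gopp, gone, gi in Hu1, Hu2; cbn [re im] in *; Z.div_mod_to_equations; lia.
Qed.

Lemma inO_assoc_inOI g : inO g -> exists v P, inU v /\ inOI P /\ g = gmul v P.
Proof.
  rewrite inO_mod. destruct g as [a b]; cbn [re im]. intro H.
  assert (a mod 4 = 1 \/ a mod 4 = 3 \/ b mod 4 = 1 \/ b mod 4 = 3) as [Ha | [Ha | [Hb | Hb]]]
    by (Z.div_mod_to_equations; lia).
  - exists gone, (mkGI a b). split; [now left | split].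
    + apply inOI_mod; cbn [re im]. split; [assumption | Z.div_mod_to_equations; lia].
    + unfold gmul, gone; cbn [re im]. f_equal; ring.
  - exists (gopp gone), (mkGI (- a) (- b)). split; [now right; left | split].
    + apply inOI_mod; cbn [re im]. split; Z.div_mod_to_equations; lia.
    + unfold gmul, gopp, gone; cbn [re im]. f_equal; ring.
  - exists gi, (mkGI b (- a)). split; [now right; right; left | split].
    + apply inOI_mod; cbn [re im]. split; [assumption | Z.div_mod_to_equations; lia].
    + unfold gmul, gi; cbn [re im]. f_equal; ring.
  - exists (gopp gi), (mkGI (- b) a). split; [now right; right; right | split].
    + apply inOI_mod; cbn [re im]. split; Z.div_mod_to_equations; lia.
    + unfold gmul, gopp, gi; cbn [re im]. f_equal; ring.
Qed.

Lemma inOI_quo P W Q : inOI P -> inOI W -> W = gmul P Q -> inOI Q.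
Proof.
  intros HP HW E.
  assert (HQ : inO Q).
  { apply NNPP. rewrite <- gdiv_1pi_iff. intro H1pi.
    apply (inO_gdiv Q W (proj1 HW)); [rewrite E; apply gdiv_mull, gdiv_refl | exact H1pi]. }
  destruct (inO_assoc_inOI Q HQ) as (v & Q' & Hv & HQ' & ->).
  enough (Hv1 : v = gone) by (subst v; replace (gmul gone Q') with Q' by ring; assumption).
  apply (inOI_inU_mul v (gmul P Q') Hv); [now apply inOI_mul|].
  replace (gmul v (gmul P Q')) with W by (rewrite E; ring). assumption.
Qed.

Lemma inO_of_not_gdiv_1pi a : ~ gdiv oneplusi a -> inO a.
Proof. intro H. apply NNPP. now rewrite <- gdiv_1pi_iff. Qed.

(** * Primary Gaussian integers lie in G *)

Lemma exists_gprime_gdiv a : a <> gzero -> ~ inU a -> exists r, gprime r /\ gdiv r a.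
Proof.
  induction a as [a IH] using gN_ind. intros Ha Hu.
  destruct (classic (gprime a)) as [Hp | Hp]; [exists a; split; [assumption | apply gdiv_refl]|].
  assert (exists b c, a = gmul b c /\ ~ inU b /\ ~ inU c) as (b & c & Ebc & Hb & Hc).
  { apply NNPP. intro Hn. apply Hp. split; [assumption | split; [assumption|]].
    intros b c Ebc. apply NNPP. intro H. apply Hn. exists b, c. tauto. }
  assert (Hb0 : b <> gzero) by (intros ->; apply Ha; rewrite Ebc; ring).
  assert (Hc0 : c <> gzero) by (intros ->; apply Ha; rewrite Ebc; ring).
  assert (gN c <> 1) by (intro E; now apply Hc, gN_eq1_inU).
  pose proof (gN_gt0 b Hb0); pose proof (gN_gt0 c Hc0).
  assert (gN a = gN b * gN c) by (rewrite Ebc; apply gN_mul).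
  destruct (IH b ltac:(nia) Hb0 Hb) as (r & Hr & Hrb).
  exists r. split; [assumption|]. rewrite Ebc. now apply gdiv_mulr.
Qed.

Lemma gprime_assoc r v r' : gprime r -> inU v -> r = gmul v r' -> gprime r'.
Proof.
  intros (H0 & H1 & H2) Hv E. destruct (inU_inv v Hv) as [v' Hv'].
  split; [|split].
  - intros ->. apply H0. rewrite E; ring.
  - intro Hu. apply H1. rewrite E. now apply inU_mul.
  - intros a b Eab. destruct (H2 (gmul v a) b) as [Ha | Hb]; [rewrite E, Eab; ring | | now right].
    left. replace a with (gmul v' (gmul v a)).
    + apply inU_mul; [|assumption]. apply (inU_of_mul_eq1 v' v). rewrite <- Hv'; ring.
    + transitivity (gmul (gmul v v') a); [ring | rewrite Hv'; ring].
Qed.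

Definition GI_eq_dec (a b : GI) : {a = b} + {a <> b}.
Proof. decide equality; apply Z.eq_dec. Defined.

Fixpoint insert_factor (p : GI) (l : list (GI * nat)) : list (GI * nat) :=
  match l with
  | nil => (p, 1%nat) :: nil
  | (q, k) :: l' => if GI_eq_dec p q then (q, S k) :: l' else (q, k) :: insert_factor p l'
  end.

Lemma prod_pows_insert_factor p l : prod_pows (insert_factor p l) = gmul p (prod_pows l).
Proof.
  induction l as [|[q k] l IH]; cbn [insert_factor prod_pows gpow]; [ring|].
  destruct (GI_eq_dec p q) as [-> | _]; cbn [prod_pows gpow]; [ring | rewrite IH; ring].
Qed.

Lemma in_insert_factor p l q k : In (q, k) (insert_factor p l) -> q = p \/ In q (map fst l).
Proof.
  induction l as [|[q0 k0] l IH]; cbn [insert_factor map fst In].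
  - intros [E | []]. left. congruence.
  - destruct (GI_eq_dec p q0) as [-> | _]; cbn [In].
    + intros [E | H]; [left; congruence | right; right; apply in_map_iff; now exists (q, k)].
    + intros [E | H]; [right; left; congruence | destruct (IH H); tauto].
Qed.

Lemma NoDup_insert_factor p l : NoDup (map fst l) -> NoDup (map fst (insert_factor p l)).
Proof.
  induction l as [|[q k] l IH]; cbn [insert_factor map fst]; intro H.
  - repeat constructor. intros [].
  - inversion H as [|? ? Hq Hl]; subst.
    destruct (GI_eq_dec p q) as [-> | Hpq]; cbn [map fst]; constructor; auto.
    intros (x & Ex & Hx)%in_map_iff. destruct x as [q' k']; cbn [fst] in Ex; subst q'.
    destruct (in_insert_factor p l q k' Hx); [congruence | contradiction].
Qed.

Lemma inOI_prod_pows P : inOI P -> exists l,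
  NoDup (map fst l) /\ (forall p k, In (p, k) l -> gprime p /\ inOI p) /\ P = prod_pows l.
Proof.
  induction P as [P IH] using gN_ind. intro HP.
  destruct (classic (P = gone)) as [-> | NE].
  { exists nil. split; [constructor | split; [intros ? ? [] | reflexivity]]. }
  assert (Hu : ~ inU P).
  { intro Hu. apply NE, (inOI_inU_mul P gone Hu); [split; reflexivity|].
    replace (gmul P gone) with P by ring. assumption. }
  destruct (exists_gprime_gdiv P (inO_neq0 P (proj1 HP)) Hu) as (r & Hr & [c Ec]).
  assert (Hro : inO r)
    by (apply inO_of_not_gdiv_1pi, (inO_gdiv r P (proj1 HP)); rewrite Ec; apply gdiv_mulr, gdiv_refl).
  destruct (inO_assoc_inOI r Hro) as (v & r' & Hv & Hr' & Er).
  pose proof (gprime_assoc r v r' Hr Hv Er) as Hpr'.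
  assert (EP : P = gmul r' (gmul v c)) by (rewrite Ec, Er; ring).
  pose proof (inOI_quo r' P (gmul v c) Hr' HP EP) as HR.
  assert (gN P = gN r' * gN (gmul v c)) by (rewrite EP at 1; apply gN_mul).
  pose proof (gN_gt0 _ (inO_neq0 _ (proj1 HR))); pose proof (gN_gt0 r' (proj1 Hpr')).
  assert (gN r' <> 1) by (intro E; now apply (proj1 (proj2 Hpr')), gN_eq1_inU).
  destruct (IH (gmul v c) ltac:(nia) HR) as (l & Hl1 & Hl2 & Hl3).
  exists (insert_factor r' l). split; [now apply NoDup_insert_factor | split].
  - intros p k [-> | (x & Ex & Hx)%in_map_iff]%in_insert_factor; [now split|].
    destruct x as [p' k']; cbn [fst] in Ex; subst p'. now apply (Hl2 p k').
  - rewrite prod_pows_insert_factor, <- Hl3. exact EP.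
Qed.

Lemma inOI_inG P : inOI P -> inG P.
Proof.
  intros (l & Hl1 & Hl2 & Hl3)%inOI_prod_pows.
  exists 0%nat, l. split; [assumption | split; [assumption|]]. rewrite Hl3 at 1. cbn [gpow]. ring.
Qed.

(** * The parametrization *)

Lemma inOI_add_sub_gi X Y : inOI X -> inOI Y -> exists A B,
  gadd X (gmul gi Y) = gmul oneplusi A /\ gsub X (gmul gi Y) = gmul oneplusi B /\
  inO A /\ inO B.
Proof.
  rewrite !inOI_mod. destruct X as [x1 x2], Y as [y1 y2]; cbn [re im].
  intros [Hx1 Hx2] [Hy1 Hy2].
  exists (mkGI ((x1 - y2 + x2 + y1) / 2) ((x2 + y1 - x1 + y2) / 2)),
         (mkGI ((x1 + y2 + x2 - y1) / 2) ((x2 - y1 - x1 - y2) / 2)).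
  rewrite !inO_mod. unfold gsub, gadd, gopp, gmul, gi, oneplusi; cbn [re im].
  split; [|split; [|split]]; try f_equal; Z.div_mod_to_equations; lia.
Qed.

Lemma add_sub_gi_mul X Y :
  gmul (gadd X (gmul gi Y)) (gsub X (gmul gi Y)) = gadd (gmul X X) (gmul Y Y).
Proof. transitivity (gsub (gmul X X) (gmul (gmul gi gi) (gmul Y Y))); [ring | rewrite gi_sq; ring]. Qed.

Lemma add_sub_halves_mul X Y W A B c :
  gadd (gmul X X) (gmul Y Y) = gmul c (gmul (gmul oneplusi W) (gmul oneplusi W)) ->
  gadd X (gmul gi Y) = gmul oneplusi A -> gsub X (gmul gi Y) = gmul oneplusi B ->
  gmul A B = gmul c (gmul W W).
Proof.
  intros E EA EB. apply (gmul_reg_l (gmul oneplusi oneplusi)); [discriminate|].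
  transitivity (gmul (gadd X (gmul gi Y)) (gsub X (gmul gi Y))); [rewrite EA, EB; ring|].
  rewrite add_sub_gi_mul, E. ring.
Qed.

Lemma gcoprime_add_sub_halves X Y W A B c :
  gcd3_unit X Y (gmul oneplusi W) -> inO A -> inU c ->
  gadd X (gmul gi Y) = gmul oneplusi A -> gsub X (gmul gi Y) = gmul oneplusi B ->
  gmul A B = gmul c (gmul W W) -> gcoprime A B.
Proof.
  intros Hgcd HA Hc EA EB EAB. apply gcoprime_of_common_inU. intros d HdA HdB.
  destruct (gdiv_of_gdiv_add_sub d X Y (inO_gdiv d A HA HdA)) as [HdX HdY];
    [rewrite EA; now apply gdiv_mull | rewrite EB; now apply gdiv_mull |].
  assert (HdW : gdiv d W).
  { apply (gcoprime_gdiv_mul d W W).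
    - apply gcoprime_of_common_inU. intros k Hkd HkW.
      apply Hgcd; [apply (gdiv_trans _ d); assumption .. | now apply gdiv_mull].
    - destruct (inU_inv c Hc) as [c' Hc'].
      replace (gmul W W) with (gmul c' (gmul A B)); [now apply gdiv_mull, gdiv_mulr|].
      rewrite EAB. transitivity (gmul (gmul c c') (gmul W W)); [ring | rewrite Hc'; ring]. }
  apply Hgcd; [assumption .. | now apply gdiv_mull].
Qed.

Lemma gcoprime_mul_sq_primary A B c W :
  gcoprime A B -> inU c -> inO A -> gmul A B = gmul c (gmul W W) ->
  exists t P Q, (t <= 3)%nat /\ inOI P /\ A = gmul (gpow gi t) (gmul P P) /\ W = gmul P Q.
Proof.
  intros Hcop Hc HA EAB.
  destruct (gcoprime_mul_sq A B c W Hcop Hc (inO_neq0 A HA) EAB) as (g & u & Hu & Eg & [w' Ew']).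
  assert (Hg : inO g).
  { apply inO_of_not_gdiv_1pi, (inO_gdiv g A HA).
    rewrite Eg. apply gdiv_mull, gdiv_mulr, gdiv_refl. }
  destruct (inO_assoc_inOI g Hg) as (v & P & Hv & HP & ->).
  destruct (inU_gpow_gi (gmul u (gmul v v))) as (t & Ht & Et); [auto using inU_mul|].
  exists t, P, (gmul v w'). split; [assumption | split; [assumption | split]].
  - rewrite Eg, <- Et. ring.
  - rewrite Ew'. ring.
Qed.

Lemma recover_X_Y eps t X Y P Q B :
  gadd X (gmul gi Y) = gmul oneplusi (gmul (gpow gi t) (gmul P P)) ->
  gsub X (gmul gi Y) = gmul oneplusi B ->
  gmul (gpow gi t) B = gmul (gmul (gofZ eps) gi) (gmul Q Q) ->
  gmul oneplusi X =
    gmul (gpow gi (S t))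
      (gadd (gmul P P) (gmul (gmul (gmul (gofZ eps) (gpow (gopp gone) t)) gi) (gmul Q Q))) /\
  gmul oneplusi Y =
    gmul (gpow gi t)
      (gsub (gmul P P) (gmul (gmul (gmul (gofZ eps) (gpow (gopp gone) t)) gi) (gmul Q Q))).
Proof.
  intros EA EB EBQ. apply gpow_gi_solve in EBQ. cbn [gpow].
  split.
  - apply (gmul_reg_l (gadd gone gone)); [discriminate|].
    transitivity (gmul oneplusi (gadd (gadd X (gmul gi Y)) (gsub X (gmul gi Y)))); [ring|].
    rewrite EA, EB.
    transitivity (gmul (gmul oneplusi oneplusi) (gadd (gmul (gpow gi t) (gmul P P)) B));
      [ring | rewrite gsq_1pi, EBQ; ring].
  - apply (gmul_reg_l (gmul (gadd gone gone) gi)); [discriminate|].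
    transitivity (gmul oneplusi (gsub (gadd X (gmul gi Y)) (gsub X (gmul gi Y)))); [ring|].
    rewrite EA, EB.
    transitivity (gmul (gmul oneplusi oneplusi) (gsub (gmul (gpow gi t) (gmul P P)) B));
      [ring | rewrite gsq_1pi, EBQ; ring].
Qed.

Theorem theorem4p10 (eps : Z) (X Y Z W : GI) :
  (eps = 1 \/ eps = -1) ->
  gadd (gmul X X) (gmul Y Y) = gmul (gmul (gofZ eps) gi) (gmul Z Z) ->
  gcd3_unit X Y Z ->
  gmul (gmul X Y) Z <> gzero ->
  inOI X -> inOI Y ->
  Z = gmul oneplusi W -> inOI W ->
  exists (t : nat) (P Q : GI),
    (t <= 3)%nat /\ inG P /\ inG Q /\
    ~ gdiv oneplusi P /\ ~ gdiv oneplusi Q /\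
    no_common_prime P Q /\
    gmul oneplusi X =
      gmul (gpow gi (S t))
        (gadd (gmul P P)
              (gmul (gmul (gmul (gofZ eps) (gpow (gopp gone) t)) gi) (gmul Q Q))) /\
    gmul oneplusi Y =
      gmul (gpow gi t)
        (gsub (gmul P P)
              (gmul (gmul (gmul (gofZ eps) (gpow (gopp gone) t)) gi) (gmul Q Q))) /\
    Z = gmul oneplusi (gmul P Q).
Proof.
  intros Heps Heq Hgcd _ HX HY -> HW.
  assert (He : inU (gmul (gofZ eps) gi))
    by (unfold inU; destruct Heps as [-> | ->]; [right; right; left | right; right; right]; reflexivity).
  destruct (inOI_add_sub_gi X Y HX HY) as (A & B & EA & EB & HA & _).
  pose proof (add_sub_halves_mul X Y W A B _ Heq EA EB) as EAB.
  pose proof (gcoprime_add_sub_halves X Y W A B _ Hgcd HA He EA EB EAB) as Hcop.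
  destruct (gcoprime_mul_sq_primary A B _ W Hcop He HA EAB) as (t & P & Q & Ht & HP & EA' & EW).
  pose proof (inOI_quo P W Q HP HW EW) as HQ.
  assert (EBQ : gmul (gpow gi t) B = gmul (gmul (gofZ eps) gi) (gmul Q Q)).
  { apply (gmul_reg_l (gmul P P)).
    - intros [E | E]%gmul_eq0; exact (inO_neq0 P (proj1 HP) E).
    - transitivity (gmul A B); [rewrite EA'; ring | rewrite EAB, EW; ring]. }
  assert (EA'' : gadd X (gmul gi Y) = gmul oneplusi (gmul (gpow gi t) (gmul P P)))
    by (rewrite EA, EA'; reflexivity).
  destruct (recover_X_Y eps t X Y P Q B EA'' EB EBQ) as [EX EY].
  exists t, P, Q. split; [assumption|].
  split; [now apply inOI_inG | split; [now apply inOI_inG|]].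
  split; [intro H; exact (proj1 (gdiv_1pi_iff P) H (proj1 HP))|].
  split; [intro H; exact (proj1 (gdiv_1pi_iff Q) H (proj1 HQ))|].
  split; [|split; [exact EX | split; [exact EY | rewrite EW; reflexivity]]].
  intros r (_ & Hr & _) HrP HrQ. apply Hr, (gcoprime_common_inU A B r Hcop).
  - rewrite EA'. now apply gdiv_mull, gdiv_mulr.
  - rewrite (gpow_gi_solve t B _ EBQ). now apply gdiv_mull, gdiv_mull, gdiv_mull, gdiv_mulr.
Qed.
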